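(* Let $\mathcal{F}\subseteq(\mathcal{X}\to\{0,1\})$. For every $\varepsilon\in[0,1]$, $$\big|\mathsf{RDim}_\varepsilon(\mathcal{F})-\log N_{\mathsf{frac}}(\mathcal{F};\varepsilon)\big|\le2.$$
   Context: Fractional covering number of $\mathcal{F}$ at scale $\Delta$: $N_{\mathsf{frac}}(\mathcal{F};\Delta)=\inf_{p\in\Delta(\mathcal{F})}\sup_{\nu\in\Delta(\mathcal{X}),f^\star\in\mathcal{F}}\frac{1}{p(\{f:\mathbb{P}_{x\sim\nu}(f(x)\ne f^\star(x))\le\Delta\})}$. A distribution $\mathscr{H}$ over finite subsets of $\mathcal{F}$ is an $\varepsilon$-probabilistic representation of $\mathcal{F}$ if for every $\nu\in\Delta(\mathcal{X})$ and $f\in\mathcal{F}$, with probability at least $3/4$ over $\mathcal{H}\sim\mathscr{H}$ there is $h\in\mathcal{H}$ with $\mathbb{P}_{x\sim\nu}(h(x)\ne f(x))\le\varepsilon$. Its size is $\sup_{\mathcal{H}\in\mathrm{supp}(\mathscr{H})}\log|\mathcal{H}|$, and $\mathsf{RDim}_\varepsilon(\mathcal{F})$ is the infimum of sizes over all $\varepsilon$-probabilistic representations. Logarithms are natural. *)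

From mathcomp Require Import all_boot all_order all_algebra.
From mathcomp Require Import all_classical all_reals all_analysis.
Set Implicit Arguments. Unset Strict Implicit. Unset Printing Implicit Defensive.
Import Order.TTheory GRing.Theory Num.Theory.
Local Open Scope classical_set_scope.
Local Open Scope ring_scope.

Section Defs.
Variable R : realType.

Definition is_dist (T : choiceType) (w : T -> R) : Prop :=
  (forall t, 0 <= w t) /\ (\esum_(t in [set: T]) (w t)%:E = 1)%E.

Definition prob (T : choiceType) (w : T -> R) (A : set T) : \bar R :=
  \esum_(t in A) (w t)%:E.

Definition dist_on (X : Type) (F : set (X -> bool)) (p : (X -> bool) -> R) :=
  is_dist p /\ (forall f, 0 < p f -> F f).

Definition disagree (X : Type) (nu : {classic X} -> R) (h f : X -> bool)
  : \bar R := prob nu [set x : {classic X} | h x != f x].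

Definition einv (q : \bar R) : \bar R :=
  match q with
  | r%:E => if r == 0 then +oo%E else (r^-1)%:E
  | +oo%E => 0%E
  | -oo%E => -oo%E
  end.

Definition lnE (q : \bar R) : \bar R :=
  match q with
  | r%:E => (ln r)%:E
  | +oo%E => +oo%E
  | -oo%E => -oo%E
  end.

Definition lncard (n : nat) : \bar R :=
  if n == 0%N then -oo%E else (ln (n%:R : R))%:E.

Definition Nfrac (X : Type) (F : set (X -> bool)) (Delta : R) : \bar R :=
  ereal_inf [set ereal_sup
      [set y | exists (nu : {classic X} -> R) (fs : X -> bool),
         [/\ is_dist nu, F fs &
             y = einv (prob p [set f | (disagree nu f fs <= Delta%:E)%E])]]
    | p in dist_on F].

Definition prob_rep (X : Type) (F : set (X -> bool)) (eps : R)
  (HH : set (X -> bool) -> R) : Prop :=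
  is_dist HH /\
  (forall H, 0 < HH H -> finite_set H /\ H `<=` F) /\
  (forall (nu : {classic X} -> R) (f : X -> bool), is_dist nu -> F f ->
     ((3 / 4 : R)%:E <=
        prob HH [set H | exists2 h, H h & (disagree nu h f <= eps%:E)%E])%E).

Definition rep_size (X : Type) (HH : set (X -> bool) -> R) : \bar R :=
  ereal_sup [set lncard n | n in
    [set n : nat | exists H : set (X -> bool), 0 < HH H /\ (H #= `I_n)%card]].

Definition RDim (X : Type) (F : set (X -> bool)) (eps : R) : \bar R :=
  ereal_inf [set rep_size HH | HH in prob_rep F eps].

End Defs.

From mathcomp Require Import all_boot all_order all_algebra.
From mathcomp Require Import all_classical all_reals all_analysis.
From mathcomp Require Import ring lra.
From mathcomp Require Import finmap.
Set Implicit Arguments. Unset Strict Implicit. Unset Printing Implicit Defensive.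
Import Order.TTheory GRing.Theory Num.Theory.
Local Open Scope classical_set_scope.
Local Open Scope ring_scope.

(* Both directions pass through finitely supported distributions.
   If HH is an eps-representation with log |H| <= s on its support, keep finitely many
   sets H of total mass at least 3/4 and spread the mass of each H uniformly over its at
   most e^s elements.  For every nu and f*, the sets containing an h eps-close to f*
   carry mass at least 1/2, so the eps-ball around f* receives mass at least e^-s / 2,
   whence N_frac <= 2 e^s.
   Conversely, if p witnesses N_frac < N, every eps-ball has p-mass above 1/N; after
   truncating p up to 1/(10N), a set of m ~ 9N/4 independent draws misses a given ball
   with probability at most (1 - 9/(10N))^m <= e^-2 < 1/4, and has at most m elements.
   Taking s within 1 of RDim and N = 11/10 N_frac, the inequalities 2 e <= e^2 and
   9N/4 + 1 <= e^2 N_frac give the constant 2. *)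

Section DiscreteDistributions.
Variable R : realType.

Lemma esum_indicator (T : choiceType) (A : set T) (y : T) (c : R) : 0 <= c ->
  (\esum_(x in A) (if y == x then c else 0)%:E = (if y \in A then c else 0)%:E)%E.
Proof.
move=> c0.
rewrite (eq_esum (b := fun x => if x \in [set y] then c%:E else 0%E)); last first.
  by move=> x _; rewrite in_set1 eq_sym /=; case: eqP.
rewrite -(esum_mkcondr _ _ (fun=> c%:E)); case: ifPn => [/set_mem Ay|/negP nAy].
  rewrite (_ : A `&` [set y] = [set y]) ?esum_set1 ?lee_fin //.
  by apply/seteqP; split=> x /=; [case|move=> ->].
rewrite (_ : A `&` [set y] = set0) ?esum_set0 //.
by apply/seteqP; split => x //= [Ax xy]; apply: nAy; apply: mem_set; rewrite -xy.
Qed.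

Definition pushw (I T : choiceType) (L : seq I) (phi : I -> T) (nu : I -> R)
  (x : T) : R :=
  \sum_(i <- L | phi i == x) nu i.

Section PushWeights.
Variables (I T : choiceType) (L : seq I) (phi : I -> T) (nu : I -> R).
Hypothesis nu_ge0 : forall i, i \in L -> 0 <= nu i.

Lemma prob_pushw (A : set T) :
  prob (pushw L phi nu) A = (\sum_(i <- L | phi i \in A) nu i)%:E.
Proof.
rewrite /prob /pushw.
rewrite (eq_esum (b := fun x => \sum_(i <- L | i \in L)
                                 (if phi i == x then nu i else 0)%:E)); last first.
  by move=> x _; rewrite -sumEFin -big_seq big_mkcond; apply: eq_bigr => i _; case: eqP.
rewrite (@esum_sum _ _ _ A L (fun i => i \in L)
           (fun x i => (if phi i == x then nu i else 0)%:E)); last first.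
  by move=> x i _ iL; case: eqP; rewrite ?lee_fin ?nu_ge0.
rewrite [in RHS]big_mkcond -sumEFin big_seq /=; apply: eq_bigr => i iL.
by rewrite esum_indicator ?nu_ge0 //; case: ifP.
Qed.

Lemma pushw_ge0 x : 0 <= pushw L phi nu x.
Proof. by rewrite /pushw big_seq_cond; apply: sumr_ge0 => i /andP[/nu_ge0]. Qed.

Lemma is_dist_pushw : \sum_(i <- L) nu i = 1 -> is_dist (pushw L phi nu).
Proof.
move=> sum1; split => [x|]; first exact: pushw_ge0.
have := prob_pushw setT; rewrite /prob => ->.
by rewrite (eq_bigl xpredT) ?sum1 // => i /=; rewrite in_setT.
Qed.

End PushWeights.

Lemma pushw_gt0 (I T : choiceType) (L : seq I) (phi : I -> T) (nu : I -> R) x :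
  0 < pushw L phi nu x -> exists2 i, i \in L & phi i = x.
Proof.
move=> h; case: (pselect (exists2 i, i \in L & phi i = x)) => // hn.
move: h; rewrite /pushw big1_seq ?ltxx //.
by move=> i /andP[/eqP e iL]; exfalso; apply: hn; exists i.
Qed.

Definition dirac_w (T : choiceType) (x : T) : T -> R := pushw [:: x] id (fun=> 1).

Lemma is_dist_dirac (T : choiceType) (x : T) : is_dist (dirac_w x).
Proof. by apply: is_dist_pushw => //; rewrite big_seq1. Qed.

Lemma prob_ge0 (T : choiceType) (w : T -> R) A : is_dist w -> (0 <= prob w A)%E.
Proof. by move=> [w0 _]; apply: esum_ge0 => t _; rewrite lee_fin. Qed.

Lemma prob_le1 (T : choiceType) (w : T -> R) A : is_dist w -> (prob w A <= 1)%E.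
Proof.
move=> [w0 w1]; rewrite -w1 /prob (esumID A setT) ?setTI; last first.
  by move=> t _; rewrite lee_fin.
by rewrite leeDl //; apply: esum_ge0 => t _; rewrite lee_fin.
Qed.

Lemma sum_le_esum (T : choiceType) (w : T -> R) (A : set T) (s : seq T) :
  (forall t, 0 <= w t) -> uniq s -> {subset s <= A} ->
  ((\sum_(t <- s) w t)%:E <= \esum_(t in A) (w t)%:E)%E.
Proof.
move=> w0 us sA; apply: esum_ge; exists [set` s]; first by split => // t /= /sA /set_mem.
by rewrite -sumEFin fsbig_seq.
Qed.

Lemma dist_finite_approx (T : choiceType) (w : T -> R) (eta : R) :
  is_dist w -> 0 < eta ->
  exists s : seq T, [/\ forall t, t \in s -> 0 < w t, \sum_(t <- s) w t <= 1 &
    forall A, (prob w A <= (\sum_(t <- s | t \in A) w t + eta)%:E)%E].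
Proof.
move=> [w0 w1] eta0.
have : ((1 - eta)%:E < \esum_(t in [set: T]) (w t)%:E)%E by rewrite w1 lte_fin; lra.
case/ereal_sup_gt => _ [Y [finY _] <-]; rewrite fsbig_finite // sumEFin lte_fin.
set s := [seq t <- enum_fset (fset_set Y) | 0 < w t] => mass_Y.
have us : uniq s by rewrite filter_uniq // fset_uniq.
have mass_s : 1 - eta < \sum_(t <- s) w t.
  rewrite big_filter; move: mass_Y.
  rewrite (bigID (fun t => 0 < w t)) /= [X in _ < _ + X]big1 ?addr0 //.
  by move=> t; rewrite lt_neqAle w0 andbT negbK => /eqP <-.
exists s; split => [t||A]; first by rewrite mem_filter => /andP[].
  by rewrite -lee_fin -w1; apply: sum_le_esum => // t _; apply: mem_set.
have out_A : ((\sum_(t <- s | t \notin A) w t)%:E <= prob w (~` A))%E.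
  rewrite -big_filter; apply: sum_le_esum => //; first exact: filter_uniq.
  by move=> t; rewrite mem_filter => /andP[/negP nA _]; apply/mem_set => /mem_set.
have split_A : (prob w A + prob w (~` A) = 1)%E.
  have := esumID A setT (fun t => (w t)%:E) (fun t _ => w0 t).
  by rewrite !setTI w1 => ->.
move: split_A out_A (prob_ge0 A (conj w0 w1)).
case: (prob w A) => [ra| |]; case: (prob w (~` A)) => [rb| |] //= [split_A].
rewrite !lee_fin => out_A _.
have : \sum_(t <- s) w t
    = \sum_(t <- s | t \in A) w t + \sum_(t <- s | t \notin A) w t.
  by rewrite (bigID (fun t => t \in A)).
lra.
Qed.

Lemma dist_finite_normalized (T : choiceType) (p : T -> R) (eta : R) :
  is_dist p -> 0 < eta < 1 ->
  exists S : seq T, exists w : 'I_(size S) -> R,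
    [/\ forall t, t \in S -> 0 < p t, forall j, 0 <= w j, \sum_j w j = 1 &
      forall A, (prob p A <= (\sum_(j | tnth (in_tuple S) j \in A) w j + eta)%:E)%E].
Proof.
move=> dp /andP[eta0 eta_lt1].
have [S [S_pos S_le1 approx]] := dist_finite_approx dp eta0.
set Z := \sum_(t <- S) p t.
have Z0 : 0 < Z.
  have := approx setT; rewrite (eq_bigl xpredT) => [|t]; last by rewrite in_setT.
  by rewrite -/Z (_ : prob p setT = 1%E) ?lee_fin; [lra | case: dp].
pose w (j : 'I_(size S)) := p (tnth (in_tuple S) j) / Z.
have sum_w (P : pred T) :
    \sum_(j | P (tnth (in_tuple S) j)) w j = (\sum_(t <- S | P t) p t) / Z.
  by rewrite mulr_suml [RHS]big_tnth.
exists S, w; split=> // [j||A].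
- by rewrite divr_ge0 // ltW // S_pos // mem_tnth.
- by rewrite (sum_w xpredT) divff // gt_eqF.
apply: le_trans (approx A) _; rewrite lee_fin lerD2r sum_w ler_pdivlMr // ler_piMr //.
by rewrite big_seq_cond; apply: sumr_ge0 => t /andP[/S_pos/ltW].
Qed.

End DiscreteDistributions.

Lemma sum_ffun_prod_all (R : comPzSemiRingType) (m k : nat) (w : 'I_k -> R)
    (a : pred 'I_k) :
  \sum_(t : {ffun 'I_m -> 'I_k} | [forall i, a (t i)]) \prod_i w (t i)
    = (\sum_(j | a j) w j) ^+ m.
Proof.
have -> : (\sum_(j | a j) w j) ^+ m
    = \prod_(i < m) \sum_j (if a j then w j else 0).
  by rewrite big_mkcond prodr_const card_ord.
rewrite bigA_distr_bigA big_mkcond /=.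
apply: eq_bigr => t _; case: forallP => [all_a|/existsNP [i not_a]].
  by apply: eq_bigr => i _; rewrite all_a.
by rewrite (bigD1 i) //= ifN ?mul0r //; apply/negP.
Qed.

Section RealInequalities.
Variable R : realType.

Lemma expR2_ge4 : 4 <= expR (2 : R).
Proof.
have -> : (2 : R) = 1 + 1 by [].
rewrite expRD; have h := expR_ge1Dx (1 : R).
have h0 : 0 <= 1 + (1:R) by lra.
by have := ler_pM h0 h0 h h; rewrite (_ : (1 + 1) * (1 + 1) = (4 : R)) //; lra.
Qed.

Lemma exprn_le_inv4 (x y : R) (m : nat) :
  0 <= y -> y <= 1 - x -> 2 <= x * m%:R -> y ^+ m <= 4^-1.
Proof.
move=> y0 yx xm.
apply: (@le_trans _ _ ((1 - x) ^+ m)); first by apply: lerXn2r; rewrite ?nnegrE; lra.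
apply: (@le_trans _ _ (expR (- x) ^+ m)).
  apply: lerXn2r; rewrite ?nnegrE ?expR_ge0 //; first lra.
  by have := expR_ge1Dx (- x).
rewrite -expRM_natr; apply: (@le_trans _ _ (expR (- 2))); first by rewrite ler_expR; lra.
by rewrite expRN lef_pV2 ?posrE ?expR_gt0 // expR2_ge4.
Qed.

Lemma einv_le_inv (q : \bar R) (c : R) : 0 < c -> (c%:E <= q)%E -> (einv q <= c^-1%:E)%E.
Proof.
case: q => [r| |] //= c0; rewrite ?lee_fin => cr.
  by rewrite gt_eqF ?(lt_le_trans c0) // lee_fin lef_pV2 ?posrE ?(lt_le_trans c0 cr).
by rewrite invr_ge0 ltW.
Qed.

Lemma einv_lt_inv (q : \bar R) (N : R) :
  0 < N -> (0 <= q)%E -> (einv q < N%:E)%E -> (N^-1%:E < q)%E.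
Proof.
case: q => [r| |] //= N0; rewrite ?lee_fin => r0; last by rewrite ltry.
case: eqP => [_|/eqP rn0]; first by rewrite ltNge leey.
have rpos : 0 < r by rewrite lt_neqAle eq_sym rn0.
by rewrite !lte_fin => h; rewrite -[r]invrK ltf_pV2 ?posrE ?invr_gt0.
Qed.

Lemma lncard_le_expR n (s : R) : (lncard R n <= s%:E)%E -> (0 < n)%N -> n%:R <= expR s.
Proof.
rewrite /lncard; case: n => // n; rewrite lee_fin => h _.
by rewrite -[X in X <= _]lnK ?ler_expR // posrE ltr0n.
Qed.

End RealInequalities.

Section Spread.
Variables (R : realType) (T : choiceType).
Variables (Hs : seq (set T)) (w : set T -> R).
Hypothesis w_ge0 : forall H, H \in Hs -> 0 <= w H.

(* fset_set H is empty for an infinite H. *)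
Definition spread : seq (T * R) :=
  flatten [seq [seq (g, w H / (#|` fset_set H|)%:R) | g <- enum_fset (fset_set H)]
          | H <- Hs].

Lemma sum_spread (P : pred T) :
  \sum_(q <- spread | P q.1) q.2
    = \sum_(H <- Hs) \sum_(g <- fset_set H | P g) w H / (#|` fset_set H|)%:R.
Proof. by rewrite big_flatten /= big_map; apply: eq_bigr => H _; rewrite big_map. Qed.

Lemma mem_spread q : q \in spread ->
  exists2 H, H \in Hs & q.1 \in fset_set H /\ q.2 = w H / (#|` fset_set H|)%:R.
Proof. by move=> /flattenP [l /mapP [H HHs ->] /mapP [g gH ->]]; exists H. Qed.

Lemma spread_ge0 q : q \in spread -> 0 <= q.2.
Proof. by move=> /mem_spread [H /w_ge0 wH [_ ->]]; rewrite divr_ge0. Qed.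

Lemma sum_spread_le : \sum_(q <- spread) q.2 <= \sum_(H <- Hs) w H.
Proof.
rewrite (sum_spread xpredT) big_seq [X in _ <= X]big_seq; apply: ler_sum => H /w_ge0 wH.
have -> : \sum_(g <- fset_set H) w H / (#|` fset_set H|)%:R
    = w H / (#|` fset_set H|)%:R * (#|` fset_set H|)%:R.
  by rewrite card_fset_sum1 natr_sum mulr_sumr; apply: eq_bigr => g _; rewrite mulr1.
have [->|n0] := posnP #|` fset_set H|; first by rewrite mulr0.
by rewrite divfK // pnatr_eq0 -lt0n.
Qed.

Lemma spread_mass_ge (A : set T) (M : R) : 0 < M ->
  (forall H, H \in Hs -> finite_set H /\ (#|` fset_set H|)%:R <= M) ->
  M^-1 * \sum_(H <- Hs | H \in [set H | exists2 h, H h & A h]) w H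
    <= \sum_(q <- spread | q.1 \in A) q.2.
Proof.
move=> M0 small; rewrite sum_spread mulr_sumr big_mkcond big_seq [X in _ <= X]big_seq /=.
apply: ler_sum => H HHs; have [finH cardH] := small H HHs.
have term_ge0 : 0 <= w H / (#|` fset_set H|)%:R by rewrite divr_ge0 ?w_ge0.
case: ifPn => [/set_mem [h Hh Ah]|_]; last by apply: sumr_ge0 => *.
have hH : h \in fset_set H by rewrite in_fset_set //; apply: mem_set.
rewrite (big_rem h) //= ifT; last exact: mem_set.
have n0 : (0 < #|` fset_set H|)%N by rewrite cardfs_gt0; apply/eqP => e; rewrite e in hH.
rewrite -[X in X <= _]addr0; apply: lerD; last by apply: sumr_ge0 => *.
rewrite mulrC; apply: ler_wpM2l; first exact: w_ge0.
by rewrite lef_pV2 // posrE ltr0n.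
Qed.

End Spread.

Section Sampling.
Variables (R : realType) (T : choiceType) (S : seq T) (m : nat).
Variable w : 'I_(size S) -> R.
Hypotheses (w_ge0 : forall j, 0 <= w j) (w_sum1 : \sum_j w j = 1).

Definition sample_set (t : {ffun 'I_m -> 'I_(size S)}) : set T :=
  [set tnth (in_tuple S) (t i) | i in [set: 'I_m]].

(* The law of the set of m independent draws from w. *)
Definition sample_rep : set T -> R :=
  pushw (index_enum {ffun 'I_m -> 'I_(size S)}) sample_set (fun t => \prod_i w (t i)).

Lemma sum_sample_weights : \sum_(t : {ffun 'I_m -> 'I_(size S)}) \prod_i w (t i) = 1.
Proof.
apply: etrans (_ : _ = (\sum_j w j) ^+ m) _; last by rewrite w_sum1 expr1n.
by rewrite -(sum_ffun_prod_all _ _ predT); apply: eq_bigl => t; apply/esym/forallP.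
Qed.

Lemma is_dist_sample_rep : is_dist sample_rep.
Proof.
by apply: is_dist_pushw => [t _|]; [apply: prodr_ge0 => i _ | exact: sum_sample_weights].
Qed.

Lemma sample_rep_support H : 0 < sample_rep H ->
  [/\ finite_set H, H `<=` [set` S] & (H #<= `I_m)%card].
Proof.
move=> /pushw_gt0 [t _ <-]; split.
- exact: finite_image finite_finset.
- by move=> _ [i _ <-]; apply: mem_tnth.
- by rewrite (card_le_eqr card_II); apply: card_image_le.
Qed.

Lemma prob_sample_rep_hits (A : set T) :
  prob sample_rep [set H | exists2 h, H h & A h]
    = (1 - (\sum_(j | tnth (in_tuple S) j \notin A) w j) ^+ m)%:E.
Proof.
set hits := [set H | _].
rewrite prob_pushw; last by move=> t _; apply: prodr_ge0 => i _.
have miss t : (sample_set t \notin hits)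
    = [forall i, tnth (in_tuple S) (t i) \notin A].
  apply/idP/forallP => [nhit i|miss].
    apply/negP => /set_mem Ai; move/negP: nhit; apply; apply: mem_set.
    by exists (tnth (in_tuple S) (t i)) => //; exists i.
  apply/negP => /set_mem [_ [i _ <-]] Ai.
  by move: (miss i); rewrite (mem_set Ai).
have := sum_sample_weights; rewrite (bigID (fun t => sample_set t \in hits)) /=.
rewrite (eq_bigl _ _ miss).
rewrite (sum_ffun_prod_all m w (fun j => tnth (in_tuple S) j \notin A)) => total.
by congr (_%:E); lra.
Qed.

Lemma sample_rep_hits_ge (A : set T) (x : R) :
  x <= \sum_(j | tnth (in_tuple S) j \in A) w j -> 2 <= x * m%:R ->
  ((3 / 4)%:E <= prob sample_rep [set H | exists2 h, H h & A h])%E.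
Proof.
move=> hit_ge m_ge; rewrite prob_sample_rep_hits lee_fin.
set y := \sum_(j | _) w j.
have y_ge0 : 0 <= y by apply: sumr_ge0.
have : 1 = \sum_(j | tnth (in_tuple S) j \in A) w j + y.
  by rewrite -w_sum1 (bigID (fun j => tnth (in_tuple S) j \in A)).
move=> split1; have y_le : y <= 1 - x by lra.
by have := exprn_le_inv4 y_ge0 y_le m_ge; lra.
Qed.

End Sampling.

Section RepresentationsAndCovers.
Variables (R : realType) (X : Type) (F : set (X -> bool)) (eps : R).

Local Notation close nu fs := [set f | (disagree nu f fs <= eps%:E)%E].

Lemma rep_size_le_ln (HH : set (X -> bool) -> R) (m : nat) : (0 < m)%N ->
  (forall H, 0 < HH H -> (H #<= `I_m)%card) -> (rep_size HH <= (ln m%:R)%:E)%E.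
Proof.
move=> m0 small; apply: ge_ereal_sup => _ [n [H [HHpos Hn]] <-].
have n_le_m : (n <= m)%N.
  by rewrite -(card_fset_set Hn); apply: geq_card_fset_set; apply: small.
rewrite /lncard; case: eqP => [_|/eqP n0]; first exact: leNye.
have n_pos : (0 < n)%N by rewrite lt0n.
by rewrite lee_fin ler_ln ?posrE ?ltr0n ?ler_nat.
Qed.

Lemma Nfrac_le_finite_weights (x0 : X) (f0 : X -> bool) (L : seq ((X -> bool) * R))
    (c : R) : F f0 -> 0 < c ->
  (forall q, q \in L -> 0 <= q.2 /\ F q.1) -> \sum_(q <- L) q.2 <= 1 ->
  (forall nu fs, is_dist nu -> F fs -> c <= \sum_(q <- L | q.1 \in close nu fs) q.2) ->
  (Nfrac F eps <= c^-1%:E)%E.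
Proof.
move=> Ff0 c0 L_ok sum_le1 close_ge.
have L_ge0 q : q \in L -> 0 <= q.2 by case/L_ok.
set Z := \sum_(q <- L) q.2.
have c_le_Z : c <= Z.
  pose nu0 := dirac_w R (x0 : {classic X}).
  have dnu0 : is_dist nu0 by apply: is_dist_dirac.
  apply: le_trans (close_ge nu0 _ dnu0 Ff0) _.
  rewrite /Z [X in _ <= X](bigID (fun q => q.1 \in close nu0 f0)) /= lerDl.
  by rewrite big_seq_cond; apply: sumr_ge0 => q /andP[/L_ge0].
have Z0 : 0 < Z := lt_le_trans c0 c_le_Z.
pose p := pushw L fst (fun q => q.2 / Z).
have w_ge0 q : q \in L -> 0 <= q.2 / Z by move=> /L_ge0 q0; rewrite divr_ge0 // ltW.
have p_on_F : dist_on F p.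
  split; first by apply: is_dist_pushw => //; rewrite -mulr_suml divff // gt_eqF.
  by move=> f /pushw_gt0 [q /L_ok [_ Fq] <-].
rewrite /Nfrac; apply: le_trans; first by apply: ereal_inf_lbound; exists p.
apply: ge_ereal_sup => _ [nu [fs [dnu Ffs ->]]]; apply: einv_le_inv => //.
rewrite prob_pushw // -mulr_suml lee_fin ler_pdivlMr //.
by apply: le_trans (close_ge nu fs dnu Ffs); rewrite ger_pMr.
Qed.

Lemma Nfrac_le_rep_size (x0 : X) (f0 : X -> bool) (HH : set (X -> bool) -> R) (s : R) :
  F f0 -> prob_rep F eps HH -> (rep_size HH <= s%:E)%E ->
  (Nfrac F eps <= (2 * expR s)%:E)%E.
Proof.
move=> Ff0 [dH [suppH repH]] size_le_s.
have [|Hs [Hs_pos Hs_le1 approx]] := dist_finite_approx dH (_ : 0 < 4^-1).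
  by rewrite invr_gt0.
have HH_ge0 H : H \in Hs -> 0 <= HH H by move/Hs_pos/ltW.
have small H : H \in Hs -> finite_set H /\ (#|` fset_set H|)%:R <= expR s.
  move=> HHs; have [finH _] := suppH H (Hs_pos H HHs); split => //.
  have [->|n0] := posnP #|` fset_set H|; first exact: expR_ge0.
  apply: lncard_le_expR n0; apply: le_trans size_le_s; apply: ereal_sup_ubound.
  exists #|` fset_set H| => //; exists H; split; first exact: Hs_pos.
  by case: finH => n Hn; rewrite (card_fset_set Hn).
have -> : 2 * expR s = ((expR s)^-1 / 2)^-1 by rewrite invfM !invrK mulrC.
apply: (Nfrac_le_finite_weights x0 Ff0 (L := spread Hs HH)).
- by rewrite divr_gt0 ?invr_gt0 ?expR_gt0.
- move=> q /[dup] /(spread_ge0 HH_ge0) q_ge0 /mem_spread [H HHs [gH _]]; split => //.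
  have [finH HF] := suppH H (Hs_pos H HHs).
  by apply: HF; move: gH; rewrite in_fset_set // => /set_mem.
- exact: le_trans (sum_spread_le HH_ge0) Hs_le1.
move=> nu fs dnu Ffs.
set Good := [set H | exists2 h, H h & close nu fs h].
have good_mass : 2^-1 <= \sum_(H <- Hs | H \in Good) HH H.
  by have := le_trans (repH nu fs dnu Ffs) (approx Good); rewrite lee_fin; lra.
apply: le_trans (spread_mass_ge HH_ge0 _ (expR_gt0 s) small).
by rewrite ler_pM2l ?invr_gt0 ?expR_gt0.
Qed.

Lemma rep_of_Nfrac_lt (N : R) : 1 <= N -> (Nfrac F eps < N%:E)%E ->
  exists HH, prob_rep F eps HH /\ (rep_size HH <= (ln (9/4 * N + 1))%:E)%E.
Proof.
move=> N1 /ereal_inf_lt [_ [p [dp p_on_F] <-] sup_lt].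
have N0 : 0 < N by lra.
have close_gt nu fs : is_dist nu -> F fs -> (N^-1%:E < prob p (close nu fs))%E.
  move=> dnu Ffs; apply: einv_lt_inv N0 (prob_ge0 _ dp) _.
  by apply: le_lt_trans sup_lt; apply: ereal_sup_ubound; exists nu, fs.
have eta_itv : 0 < (10 * N)^-1 < 1.
  by rewrite invr_gt0 mulr_gt0 //= invf_lt1 ?mulr_gt0 //; lra.
have [S [w [S_pos w_ge0 w_sum1 approx]]] := dist_finite_normalized dp eta_itv.
pose m := (Num.truncn (9/4 * N)).+1.
have m_gt : 9 / 4 * N < m%:R by rewrite truncnS_gt.
exists (sample_rep m w); split.
  split; first exact: is_dist_sample_rep.
  split=> [H /sample_rep_support [finH HS _]|nu fs dnu Ffs].
    by split=> // f /HS /= fS; apply: p_on_F; apply: S_pos.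
  apply: (sample_rep_hits_ge w_ge0 w_sum1 (x := 9 / (10 * N))).
    have := lt_le_trans (close_gt nu fs dnu Ffs) (approx _); rewrite lte_fin.
    have -> : 9 / (10 * N) = N^-1 - (10 * N)^-1 by field; lra.
    lra.
  have -> : 2 = 9 / (10 * N) * (20 / 9 * N) by field; lra.
  by apply: ler_wpM2l; [rewrite divr_ge0 ?mulr_ge0 // ltW | lra].
have card_le H : 0 < sample_rep m w H -> (H #<= `I_m)%card by case/sample_rep_support.
apply: le_trans (rep_size_le_ln (ltn0Sn _) card_le) _.
rewrite lee_fin ler_ln ?posrE ?ltr0n //; last by lra.
have := truncn_itv (x := 9 / 4 * N) (ltac:(lra)).
by rewrite /m -addn1 natrD => /andP[h _]; lra.
Qed.

Lemma Nfrac_ge1 (x0 : X) (f0 : X -> bool) : F f0 -> (1 <= Nfrac F eps)%E.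
Proof.
move=> Ff0; apply: le_ereal_inf_tmp => _ [p [dp _] <-].
set nu0 := dirac_w R (x0 : {classic X}).
apply: le_trans (ereal_sup_ubound _); last first.
  by exists nu0, f0; split => //; apply: is_dist_dirac.
have := prob_ge0 (close nu0 f0) dp; have := prob_le1 (close nu0 f0) dp.
case: (prob p _) => [r| |] //=; rewrite !lee_fin => r1 r0.
case: eqP => [_|/eqP rn0]; first exact: leey.
by rewrite lee_fin invf_ge1 // lt_neqAle eq_sym rn0.
Qed.

Lemma RDim_ge0 (x0 : X) (f0 : X -> bool) : F f0 -> (0 <= RDim F eps)%E.
Proof.
move=> Ff0; apply: le_ereal_inf_tmp => _ [HH [dH [suppH repH]] <-].
set nu0 := dirac_w R (x0 : {classic X}).
have dnu0 : is_dist nu0 by apply: is_dist_dirac.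
have := repH nu0 f0 dnu0 Ff0.
set Good := [set H | _].
have [[H [[h Hh _] HHpos]]|no_good] := pselect (exists H, Good H /\ 0 < HH H); last first.
  move=> mass_good; exfalso; move: mass_good.
  rewrite /prob esum1 => [|H GH]; first by rewrite lee_fin; lra.
  apply/eqP; rewrite eqe eq_le (proj1 dH) andbT leNgt.
  by apply/negP => HHpos; apply: no_good; exists H.
move=> _; have [[n Hn] _] := suppH H HHpos.
have n0 : n != 0%N.
  by apply: contraPneq Hh => n0; move: Hn; rewrite n0 II0 card_eq0 => /eqP ->.
apply: (@le_trans _ _ (lncard R n)); last first.
  by apply: ereal_sup_ubound; exists n => //; exists H.
by rewrite /lncard (negbTE n0) lee_fin ln_ge0 // ler1n lt0n.
Qed.

Lemma RDim_le_ln_Nfrac_add2 (b : R) : 1 <= b -> Nfrac F eps = b%:E ->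
  (RDim F eps <= (ln b + 2)%:E)%E.
Proof.
move=> b1 Nb.
have N1 : 1 <= 11 / 10 * b by lra.
have Nlt : (Nfrac F eps < (11 / 10 * b)%:E)%E by rewrite Nb lte_fin; lra.
have [HH [rep size_le]] := rep_of_Nfrac_lt N1 Nlt.
apply: le_trans (ereal_inf_lbound _) _; first by exists HH.
have b0 : 0 < b by lra.
apply: le_trans size_le _; rewrite lee_fin -[in X in _ <= X](expRK 2) addrC.
rewrite -lnM ?posrE ?expR_gt0 // ler_ln ?posrE ?mulr_gt0 ?expR_gt0 //; last by lra.
by have := ler_wpM2l (ltW b0) (expR2_ge4 R); lra.
Qed.

Lemma Nfrac_le_expR_RDim_add2 (x0 : X) (f0 : X -> bool) (a : R) :
  F f0 -> RDim F eps = a%:E -> (Nfrac F eps <= (expR (a + 2))%:E)%E.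
Proof.
move=> Ff0 RDa.
have [_ [HH rep <-] size_lt] : exists2 y, [set rep_size HH | HH in prob_rep F eps] y
                                      & (y < (a + 1)%:E)%E.
  by apply: ereal_inf_lt; rewrite -/(RDim F eps) RDa lte_fin; lra.
apply: le_trans (Nfrac_le_rep_size x0 Ff0 rep (ltW size_lt)) _.
rewrite lee_fin (_ : a + 2 = 1 + (a + 1)); last by lra.
by rewrite (expRD 1 (a + 1)) ler_pM2r ?expR_gt0 //; have := expR_ge1Dx (1 : R); lra.
Qed.

End RepresentationsAndCovers.

Theorem proposition6p7 (R : realType) (X : Type) (x0 : X)
  (F : set (X -> bool)) (eps : R) :
  F !=set0 -> 0 <= eps <= 1 ->
  ((RDim F eps = +oo)%E /\ (Nfrac F eps = +oo)%E) \/
  [/\ RDim F eps \is a fin_num, Nfrac F eps \is a fin_num &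
      (`| RDim F eps - lnE (Nfrac F eps) | <= 2%:E)%E].
Proof.
move=> [f0 Ff0] _.
have := Nfrac_ge1 eps x0 Ff0; have := RDim_ge0 eps x0 Ff0.
case RD: (RDim F eps) => [a| |] // _; case NF: (Nfrac F eps) => [b| |] // b1.
- rewrite lee_fin in b1; have := RDim_le_ln_Nfrac_add2 b1 NF; rewrite RD lee_fin => a_le.
  have := Nfrac_le_expR_RDim_add2 x0 Ff0 RD; rewrite NF lee_fin => b_le.
  have ln_b_le : ln b <= a + 2.
    by rewrite -(expRK (a + 2)) ler_ln ?posrE ?expR_gt0 //; lra.
  by right; split=> //=; rewrite ?lee_fin ler_norml; apply/andP; split; lra.
- by have := Nfrac_le_expR_RDim_add2 x0 Ff0 RD; rewrite NF.
- by have := RDim_le_ln_Nfrac_add2 b1 NF; rewrite RD.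
- by left.
Qed.
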